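(* Let $P$ be a convergent periodic orbit with over-rotation pair $(nr,ns)$, where $n,r,s\in\mathbb{N}$, $\gcd(r,s)=1$ and $n>1$, and suppose the code of $P$ is non-decreasing. Then the $P$-linear map $f$ has no periodic orbit of over-rotation number less than $\frac rs$; in other words, $P$ does not force any periodic orbit of over-rotation number less than $\frac rs$.
   Context: For a cycle $P$ of a map $f$, the $P$-linear map agrees with $f$ on $P$ and is affine between consecutive points of $P$. $P$ is convergent if there are no $x<y$ in $P$ with $f(x)<x$, $f(y)>y$; then the $P$-linear map has a unique fixed point $a$. Over-rotation pair: for a cycle $P$ of period $q\ge2$, $2p$ is the number of $x\in P$ with $f(x)-x$ and $f^2(x)-f(x)$ of different signs; $orp(P)=(p,q)$, $\rho(P)=p/q$ (and similarly for non-fixed periodic orbits of $f$). Write $x>_a y$ if $x<y<a$ or $x>y>a$. Code: with $\rho=\rho(P)$ and $\varphi(y)=1$ if $y>a$ and $f(y)<a$, $\varphi(y)=0$ otherwise, the code $L:P\to\mathbb{R}$ is given by $L(x_0)=0$ for the leftmost point $x_0$ of $P$ and $L(f(y))=L(y)+\rho-\varphi(y)$. The code is non-decreasing if $x>_a y$ implies $L(x)\le L(y)$ for all $x,y\in P$. *)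

From Stdlib Require Import Reals Lra Lia.
Open Scope R_scope.

Definition itr (f : R -> R) (k : nat) (x : R) : R := Nat.iter k f x.

Definition least_period (f : R -> R) (x : R) (m : nat) : Prop :=
  (1 <= m)%nat /\ itr f m x = x /\
  (forall k : nat, (0 < k < m)%nat -> itr f k x <> x).

Definition leftmost_cycle (f : R -> R) (x0 : R) (q : nat) : Prop :=
  least_period f x0 q /\ (forall k : nat, (k < q)%nat -> x0 <= itr f k x0).

Definition P_linear (f : R -> R) (x0 : R) (q : nat) : Prop :=
  forall i j : nat, (i < q)%nat -> (j < q)%nat ->
    let a := itr f i x0 in let b := itr f j x0 in
    a < b ->
    (forall k : nat, (k < q)%nat -> ~ (a < itr f k x0 < b)) ->
    forall t : R, a <= t <= b ->
      f t = f a + (f b - f a) / (b - a) * (t - a).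

Definition convergent (f : R -> R) (x0 : R) (q : nat) : Prop :=
  ~ (exists i j : nat, (i < q)%nat /\ (j < q)%nat /\
       itr f i x0 < itr f j x0 /\
       f (itr f i x0) < itr f i x0 /\ f (itr f j x0) > itr f j x0).

Definition sign_change (f : R -> R) (x : R) : nat :=
  if Rlt_dec ((f x - x) * (f (f x) - f x)) 0 then 1%nat else 0%nat.

Fixpoint sign_change_count (f : R -> R) (x : R) (m : nat) : nat :=
  match m with
  | O => O
  | S m' => (sign_change_count f x m' + sign_change f (itr f m' x))%nat
  end.

Definition orp (f : R -> R) (x : R) (p q : nat) : Prop :=
  least_period f x q /\ (2 <= q)%nat /\ sign_change_count f x q = (2 * p)%nat.

Definition over_rotation_number (f : R -> R) (x : R) (m : nat) : R :=
  INR (sign_change_count f x m) / (2 * INR m).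

Definition phi (f : R -> R) (a y : R) : R :=
  if Rlt_dec a y then (if Rlt_dec (f y) a then 1 else 0) else 0.

Fixpoint phi_sum (f : R -> R) (a x0 : R) (k : nat) : R :=
  match k with
  | O => 0
  | S k' => phi_sum f a x0 k' + phi f a (itr f k' x0)
  end.

(* The code L along the cycle: L(f^k x0) = k*rho - sum_{j<k} phi(f^j x0),
   i.e. the solution of L(x0)=0, L(f y) = L(y) + rho - phi(y). *)
Definition code (f : R -> R) (a rho x0 : R) (k : nat) : R :=
  INR k * rho - phi_sum f a x0 k.

Definition gt_a (a x y : R) : Prop := (x < y < a) \/ (a < y < x).

Definition code_nondecreasing (f : R -> R) (a rho x0 : R) (q : nat) : Prop :=
  forall i j : nat, (i < q)%nat -> (j < q)%nat ->
    gt_a a (itr f i x0) (itr f j x0) -> code f a rho x0 i <= code f a rho x0 j.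

From Stdlib Require Import Reals Arith Lra Lia Psatz Classical.
Open Scope R_scope.

(* Let P = {pt k : k < N} be the cycle, a the fixed point of the
   P-linear map f, and L the code of P at rotation number rho = rho(P), so that
   L(N) = 0 and L(f p) = L(p) + rho - phi(p) along P.

   1. Signs: on the convex hull of P, f moves points towards a (f u > u left of
      a, f u < u right of a).  On P this is convergence; elsewhere it follows
      because f - id is affine on every gap of P.  Consequently the hull is
      f-invariant and, along any periodic orbit in it, every sign change of
      f - id is a crossing of a, so the number of sign changes equals twice the
      number of right-to-left crossings: sign_change_count = 2 * phi_sum.
   2. Extend the code to the hull: D(x) (outer_code) is the largest code of a point of P
      lying beyond x as seen from a.  Monotonicity of the code and the affine
      structure on gaps give D(f z) >= D(z) + rho - phi(z) for every hull point
      z with z, f z <> a (each z is "shadowed" by a point of P).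
   3. Summing this inequality around a periodic orbit of period m gives
      phi_sum >= m * rho, i.e. its over-rotation number is at least rho. *)

Lemma itr_add (f : R -> R) (p q : nat) (x : R) : itr f (p + q) x = itr f p (itr f q x).
Proof. unfold itr; apply Nat.iter_add. Qed.

Lemma itr_fixed (f : R -> R) (a : R) (k : nat) : f a = a -> itr f k a = a.
Proof.
  intros Ha; induction k as [|k IH]; [reflexivity|].
  change (f (itr f k a) = a); rewrite IH; exact Ha.
Qed.

Lemma orbit_not_fixed (f : R -> R) (y : R) (m k : nat) :
  least_period f y m -> (2 <= m)%nat -> (k <= m)%nat -> f (itr f k y) <> itr f k y.
Proof.
  intros [_ [Hm Hmin]] H2 Hk E.
  assert (Hy : itr f m y = itr f k y).
  { replace m with (m - k + k)%nat by lia. rewrite itr_add. apply itr_fixed, E. }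
  rewrite Hm in Hy. apply (Hmin 1%nat); [lia|].
  change (f y = y). rewrite Hy. exact E.
Qed.

Lemma orbit_avoids_fixed (f : R -> R) (a y : R) (m k : nat) :
  f a = a -> least_period f y m -> (2 <= m)%nat -> (k <= m)%nat -> itr f k y <> a.
Proof.
  intros Hfa Hy H2 Hk E. apply (orbit_not_fixed f y m k Hy H2 Hk). rewrite E. exact Hfa.
Qed.

Lemma finite_argmax (h : nat -> R) (P : nat -> Prop) (N : nat) :
  (exists i, (i < N)%nat /\ P i) ->
  exists i, (i < N)%nat /\ P i /\ forall k, (k < N)%nat -> P k -> h k <= h i.
Proof.
  induction N as [|N IH]; intros [i [Hi Pi]]; [lia|].
  destruct (classic (exists i, (i < N)%nat /\ P i)) as [Ex|Nex].
  - destruct (IH Ex) as [j [Hj [Pj Hmax]]].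
    destruct (classic (P N /\ h j < h N)) as [[PN Hlt]|Hn].
    + exists N. repeat split; auto. intros k Hk Pk.
      destruct (Nat.eq_dec k N) as [->|ne]; [lra|].
      specialize (Hmax k ltac:(lia) Pk). lra.
    + exists j. repeat split; auto. intros k Hk Pk.
      destruct (Nat.eq_dec k N) as [->|ne]; [|apply Hmax; auto; lia].
      destruct (Rle_lt_dec (h N) (h j)); auto. exfalso; auto.
  - assert (i = N) as ->.
    { destruct (Nat.eq_dec i N); auto. exfalso; apply Nex; exists i; split; auto; lia. }
    exists N. repeat split; auto. intros k Hk Pk.
    destruct (Nat.eq_dec k N) as [->|ne]; [lra|].
    exfalso; apply Nex; exists k; split; auto; lia.
Qed.

Lemma affine_pos (al be t1 t2 u : R) :
  t1 <= u <= t2 -> 0 <= al + be * t1 -> 0 <= al + be * t2 ->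
  (0 < al + be * t1 /\ u < t2) \/ (t1 < u /\ 0 < al + be * t2) -> 0 < al + be * u.
Proof.
  intros Hu H1 H2 Hs.
  assert (E : (t2 - t1) * (al + be * u) = (t2 - u) * (al + be * t1) + (u - t1) * (al + be * t2))
    by ring.
  destruct Hs as [[H1' Hu'] | [Hu' H2']]; nra.
Qed.

Lemma affine_between (y0 c p z q : R) : p <= z <= q ->
  (y0 <= y0 + c * (z - p) <= y0 + c * (q - p)) \/
  (y0 + c * (q - p) <= y0 + c * (z - p) <= y0).
Proof. intros Hz. destruct (Rle_lt_dec 0 c); [left|right]; split; nra. Qed.

Definition outer (a g x : R) : Prop := (x < a /\ g <= x) \/ (a < x /\ x <= g).

Lemma outer_dec (a g x : R) : {outer a g x} + {~ outer a g x}.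
Proof.
  unfold outer.
  destruct (Rlt_dec x a), (Rle_dec g x), (Rlt_dec a x), (Rle_dec x g);
    first [left; left; split; lra | left; right; split; lra | right; lra].
Qed.

Lemma phi_same_side (f : R -> R) (a u v : R) :
  (a < u <-> a < v) -> (f u < a <-> f v < a) -> phi f a u = phi f a v.
Proof.
  intros Hu Hf. unfold phi.
  destruct (Rlt_dec a u), (Rlt_dec a v), (Rlt_dec (f u) a), (Rlt_dec (f v) a);
    tauto.
Qed.

Section FiniteExtrema.

Variable c : nat -> R.

Fixpoint min_upto (m : nat) : R :=
  match m with O => c 0 | S m' => Rmin (min_upto m') (c m') end.

Lemma min_upto_le (m k : nat) : (k < m)%nat -> min_upto m <= c k.
Proof.
  induction m as [|m IH]; intros Hk; [lia|]. simpl.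
  destruct (Nat.eq_dec k m) as [->|ne]; [apply Rmin_r|].
  eapply Rle_trans; [apply Rmin_l|]. apply IH; lia.
Qed.

Variables (P : nat -> Prop) (Pdec : forall k, {P k} + {~ P k}).

Fixpoint max_upto (base : R) (m : nat) : R :=
  match m with
  | O => base
  | S m' => if Pdec m' then Rmax (max_upto base m') (c m') else max_upto base m'
  end.

Lemma max_upto_ge (base : R) (m k : nat) : (k < m)%nat -> P k -> c k <= max_upto base m.
Proof.
  induction m as [|m IH]; intros Hk Pk; [lia|]. simpl.
  destruct (Nat.eq_dec k m) as [->|ne].
  - destruct (Pdec m); [apply Rmax_r|contradiction].
  - destruct (Pdec m); [eapply Rle_trans; [|apply Rmax_l]|]; apply IH; auto; lia.
Qed.

Lemma max_upto_le (base : R) (m : nat) (b : R) : base <= b ->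
  (forall k, (k < m)%nat -> P k -> c k <= b) -> max_upto base m <= b.
Proof.
  induction m as [|m IH]; intros Hb H; simpl; auto.
  destruct (Pdec m); [apply Rmax_lub|]; auto.
Qed.

End FiniteExtrema.

Section Cycle.

Variables (f : R -> R) (x0 a : R) (N : nat).
Hypothesis HN : (2 <= N)%nat.
Hypothesis Hper : least_period f x0 N.
Hypothesis Hlin : P_linear f x0 N.
Hypothesis Hconv : convergent f x0 N.
Hypothesis Hfa : f a = a.

Local Notation pt k := (itr f k x0).

Definition hull (z : R) : Prop :=
  exists i j : nat, (i < N)%nat /\ (j < N)%nat /\ pt i <= z <= pt j.

Definition gap (ip iq : nat) : Prop :=
  (ip < N)%nat /\ (iq < N)%nat /\ pt ip < pt iq /\
  forall k, (k < N)%nat -> ~ (pt ip < pt k < pt iq).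

Hypothesis Ha : hull a.

Lemma pt_in_hull (k : nat) : (k < N)%nat -> hull (pt k).
Proof. intros Hk. exists k, k. repeat split; auto; lra. Qed.

Lemma pt_inj (i j : nat) : (i < N)%nat -> (j < N)%nat -> pt i = pt j -> i = j.
Proof.
  destruct Hper as [_ [HxN Hmin]].
  assert (Hlt : forall i j, (i < j < N)%nat -> pt i <> pt j).
  { intros i' j' Hij E.
    apply (Hmin (N - j' + i')%nat); [lia|].
    rewrite itr_add, E, <- itr_add. replace (N - j' + j')%nat with N by lia. exact HxN. }
  intros Hi Hj E. destruct (Nat.lt_trichotomy i j) as [h|[h|h]]; auto.
  - exfalso; apply (Hlt i j); auto.
  - exfalso; apply (Hlt j i); auto.
Qed.

Lemma pt_not_fixed (k : nat) : (k < N)%nat -> f (pt k) <> pt k.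
Proof. intros Hk. apply (orbit_not_fixed f x0 N k Hper HN). lia. Qed.

Lemma pt_neq_a (k : nat) : (k < N)%nat -> pt k <> a.
Proof. intros Hk. apply (orbit_avoids_fixed f a x0 N k Hfa Hper HN). lia. Qed.

Lemma pt_step (i : nat) : (i < N)%nat ->
  exists j, (j < N)%nat /\ pt j = f (pt i) /\ (j = S i \/ (j = 0 /\ S i = N))%nat.
Proof.
  intros Hi. destruct (Nat.eq_dec (S i) N) as [e|ne].
  - exists 0%nat. split; [lia|split; [|right; auto]].
    destruct Hper as [_ [HxN _]]. rewrite <- e in HxN. symmetry; exact HxN.
  - exists (S i). split; [lia|split; [reflexivity|left; reflexivity]].
Qed.

Lemma gap_outside (ip iq k : nat) : gap ip iq -> (k < N)%nat ->
  pt k <= pt ip \/ pt iq <= pt k.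
Proof.
  intros [_ [_ [_ Hcons]]] Hk.
  destruct (Rle_lt_dec (pt k) (pt ip)); [left; auto|].
  destruct (Rle_lt_dec (pt iq) (pt k)); [right; auto|].
  exfalso; apply (Hcons k Hk); lra.
Qed.

Lemma gap_affine (ip iq : nat) : gap ip iq ->
  exists c, forall t, pt ip <= t <= pt iq -> f t = f (pt ip) + c * (t - pt ip).
Proof.
  intros [Hip [Hiq [Hpq Hcons]]]. eexists. intros t Ht. exact (Hlin ip iq Hip Hiq Hpq Hcons t Ht).
Qed.

Lemma hull_gap (z : R) : hull z -> (forall k, (k < N)%nat -> pt k <> z) ->
  exists ip iq, gap ip iq /\ pt ip < z < pt iq.
Proof.
  intros [i [j [Hi [Hj [Hiz Hzj]]]]] Hz.
  destruct (finite_argmax (fun k => pt k) (fun k => pt k <= z) N) as [ip [Hip [Hpz Hmax]]].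
  { exists i; auto. }
  destruct (finite_argmax (fun k => - pt k) (fun k => z <= pt k) N) as [iq [Hiq [Hzq Hmin]]].
  { exists j; auto. }
  pose proof (Hz ip Hip). pose proof (Hz iq Hiq).
  exists ip, iq. repeat split; auto; try lra.
  intros k Hk Hin. destruct (Rle_lt_dec (pt k) z) as [Hle|Hlt].
  - specialize (Hmax k Hk Hle). simpl in Hmax. lra.
  - specialize (Hmin k Hk ltac:(lra)). simpl in Hmin. lra.
Qed.

Lemma convergent_order (i j : nat) : (i < N)%nat -> (j < N)%nat ->
  pt i <= pt j -> f (pt i) < pt i -> f (pt j) < pt j.
Proof.
  intros Hi Hj Hij Hfi.
  destruct (Rlt_le_dec (f (pt j)) (pt j)) as [h|h]; auto. exfalso.
  pose proof (pt_not_fixed j Hj).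
  destruct (Req_dec (pt i) (pt j)) as [e|e]; [rewrite e in Hfi; lra|].
  apply Hconv. exists i, j. repeat split; auto; lra.
Qed.

Lemma cycle_side (k : nat) : (k < N)%nat ->
  (pt k < a -> pt k < f (pt k)) /\ (a < pt k -> f (pt k) < pt k).
Proof.
  intros Hk.
  destruct (hull_gap a Ha pt_neq_a) as [ip [iq [Hg [Hpa Haq]]]].
  destruct (gap_affine ip iq Hg) as [c Hc].
  pose proof (Hc a ltac:(lra)) as Ea. pose proof (Hc (pt iq) ltac:(lra)) as Eq.
  destruct Hg as [Hip [Hiq Hgap]].
  pose proof (pt_not_fixed k Hk).
  pose proof (gap_outside ip iq k (conj Hip (conj Hiq Hgap)) Hk) as Hout.
  split; intros Hka; destruct (Rlt_le_dec (pt k) (f (pt k))) as [h|h]; try lra; exfalso.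
  - (* both ends of the gap move left, so a would move left too *)
    pose proof (convergent_order k ip Hk Hip ltac:(lra) ltac:(lra)).
    pose proof (convergent_order k iq Hk Hiq ltac:(lra) ltac:(lra)).
    pose proof (affine_pos (c * pt ip - f (pt ip)) (1 - c) (pt ip) (pt iq) a).
    lra.
  - assert (Hright : forall i, (i < N)%nat -> pt i <= pt k -> pt i < f (pt i)).
    { intros i Hi Hik. destruct (Rlt_le_dec (pt i) (f (pt i))) as [g|g]; auto.
      pose proof (pt_not_fixed i Hi).
      pose proof (convergent_order i k Hi Hk Hik ltac:(lra)). lra. }
    pose proof (Hright ip Hip ltac:(lra)). pose proof (Hright iq Hiq ltac:(lra)).
    pose proof (affine_pos (f (pt ip) - c * pt ip) (c - 1) (pt ip) (pt iq) a).
    lra.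
Qed.

(* The same holds on the whole hull, since f - id is affine on every gap and
   vanishes at a. *)
Lemma hull_side (u : R) : hull u -> u <> a -> (u < a -> u < f u) /\ (a < u -> f u < u).
Proof.
  intros Hu Hna.
  destruct (classic (exists i, (i < N)%nat /\ pt i = u)) as [[i [Hi <-]]|NP].
  { apply cycle_side; exact Hi. }
  destruct (hull_gap u Hu) as [ip [iq [Hg [Hpu Huq]]]].
  { intros k Hk E; apply NP; eauto. }
  destruct (gap_affine ip iq Hg) as [c Hc].
  pose proof (Hc u ltac:(lra)) as Eu. pose proof (Hc (pt iq) ltac:(lra)) as Eq.
  destruct Hg as [Hip [Hiq _]].
  pose proof (pt_neq_a ip Hip). pose proof (pt_neq_a iq Hiq).
  destruct (cycle_side ip Hip) as [Hp1 Hp2]. destruct (cycle_side iq Hiq) as [Hq1 Hq2].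
  set (al := f (pt ip) - c * pt ip).
  destruct (Rlt_le_dec (pt iq) a) as [qa|aq]; [|destruct (Rlt_le_dec a (pt ip)) as [ap|pa]].
  - pose proof (affine_pos al (c - 1) (pt ip) (pt iq) u). split; intros; unfold al in *; lra.
  - pose proof (affine_pos (- al) (1 - c) (pt ip) (pt iq) u). split; intros; unfold al in *; lra.
  - pose proof (Hc a ltac:(lra)) as Ea.
    pose proof (affine_pos al (c - 1) (pt ip) a u).
    pose proof (affine_pos (- al) (1 - c) a (pt iq) u).
    split; intros; unfold al in *; lra.
Qed.

Lemma hull_invariant (z : R) : hull z -> hull (f z).
Proof.
  intros Hz.
  destruct (classic (exists i, (i < N)%nat /\ pt i = z)) as [[i [Hi <-]]|NP].
  { destruct (pt_step i Hi) as [j [Hj [Ej _]]]. rewrite <- Ej. apply pt_in_hull, Hj. }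
  destruct (hull_gap z Hz) as [ip [iq [Hg [Hpz Hzq]]]].
  { intros k Hk E; apply NP; eauto. }
  destruct (gap_affine ip iq Hg) as [c Hc].
  pose proof (Hc z ltac:(lra)) as Ez. pose proof (Hc (pt iq) ltac:(lra)) as Eq.
  destruct Hg as [Hip [Hiq _]].
  destruct (pt_step ip Hip) as [jp [Hjp [Ejp _]]].
  destruct (pt_step iq Hiq) as [jq [Hjq [Ejq _]]].
  destruct (affine_between (f (pt ip)) c (pt ip) z (pt iq)) as [h|h]; try lra.
  - exists jp, jq. repeat split; auto; lra.
  - exists jq, jp. repeat split; auto; lra.
Qed.

Lemma orbit_in_hull (y : R) (k : nat) : hull y -> hull (itr f k y).
Proof.
  intros Hy. induction k as [|k IH]; [exact Hy|]. apply (hull_invariant (itr f k y) IH).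
Qed.

Definition right_of (u : R) : R := if Rlt_dec a u then 1 else 0.

(* f - id changes sign at u exactly when u and f u lie on opposite sides of a;
   so a sign change is a crossing, and phi counts the right-to-left ones. *)
Lemma sign_change_crossing (u : R) : hull u -> u <> a -> f u <> a ->
  INR (sign_change f u) + right_of u = 2 * phi f a u + right_of (f u).
Proof.
  intros Hu n1 n2.
  destruct (hull_side u Hu n1) as [s1 s2].
  destruct (hull_side (f u) (hull_invariant u Hu) n2) as [t1 t2].
  unfold sign_change, phi, right_of.
  destruct (Rlt_dec a u) as [au|au]; destruct (Rlt_dec a (f u)) as [afu|afu];
    [destruct (Rlt_dec (f u) a); [lra|]|destruct (Rlt_dec (f u) a); [|lra]| |];
    destruct (Rlt_dec ((f u - u) * (f (f u) - f u)) 0) as [sc|sc]; simpl;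
    first [lra | exfalso; nra].
Qed.

Lemma sign_change_count_phi (y : R) (m : nat) :
  hull y -> least_period f y m -> (2 <= m)%nat ->
  INR (sign_change_count f y m) = 2 * phi_sum f a y m.
Proof.
  intros Hy Hl H2.
  assert (Inv : forall k, (k <= m)%nat ->
    INR (sign_change_count f y k) + right_of y = 2 * phi_sum f a y k + right_of (itr f k y)).
  { induction k as [|k IH]; intros Hk; [simpl; lra|].
    cbn [sign_change_count phi_sum]. rewrite plus_INR.
    pose proof (sign_change_crossing (itr f k y) (orbit_in_hull y k Hy)
      (orbit_avoids_fixed f a y m k Hfa Hl H2 ltac:(lia))
      (orbit_avoids_fixed f a y m (S k) Hfa Hl H2 Hk)).
    specialize (IH ltac:(lia)). change (itr f (S k) y) with (f (itr f k y)). lra. }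
  pose proof (Inv m (le_n m)) as Hm. destruct Hl as [_ [Hym _]]. rewrite Hym in Hm. lra.
Qed.

Variable rho : R.
Hypothesis Hcode : code_nondecreasing f a rho x0 N.
Hypothesis Hclosed : code f a rho x0 N = 0.

Local Notation L k := (code f a rho x0 k).

Lemma code_step (i : nat) : (i < N)%nat ->
  exists j, (j < N)%nat /\ pt j = f (pt i) /\ L j = L i + rho - phi f a (pt i).
Proof.
  intros Hi. destruct (pt_step i Hi) as [j [Hj [Ej Hsucc]]].
  exists j. split; [exact Hj|split; [exact Ej|]].
  destruct Hsucc as [-> | [-> Hi']]; [|rewrite <- Hi' in Hclosed];
    unfold code in *; cbn [phi_sum] in *; rewrite ?S_INR in *; simpl INR; lra.
Qed.

Lemma code_mono (k i : nat) : (k < N)%nat -> (i < N)%nat -> outer a (pt k) (pt i) -> L k <= L i.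
Proof.
  intros Hk Hi Hout.
  destruct (Req_dec (pt k) (pt i)) as [e|e].
  - rewrite (pt_inj k i Hk Hi e). lra.
  - apply Hcode; auto. unfold gt_a, outer in *. lra.
Qed.

(* D(x) = the largest code of a cycle point beyond x as seen from a. *)
Definition outer_code (x : R) : R :=
  max_upto (fun k => L k) (fun k => outer a (pt k) x) (fun k => outer_dec a (pt k) x)
    (min_upto (fun k => L k) N) N.

Lemma outer_code_ge (k : nat) (x : R) : (k < N)%nat -> outer a (pt k) x -> L k <= outer_code x.
Proof. intros Hk Hout. exact (max_upto_ge _ _ _ _ N k Hk Hout). Qed.

Lemma outer_code_le (i : nat) (x : R) : (i < N)%nat ->
  (forall k, (k < N)%nat -> outer a (pt k) x -> outer a (pt k) (pt i)) ->
  outer_code x <= L i.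
Proof.
  intros Hi Hdom. apply max_upto_le.
  - apply min_upto_le, Hi.
  - intros k Hk Hout. apply code_mono; auto.
Qed.

Lemma gap_end_dominates (ip iq i : nat) (z : R) : gap ip iq -> pt ip < z < pt iq ->
  (forall k, (k < N)%nat -> pt k <> z) -> i = ip \/ i = iq -> z <> a ->
  (a < pt i <-> a < z) -> forall k, (k < N)%nat -> outer a (pt k) z -> outer a (pt k) (pt i).
Proof.
  intros Hg Hz Hnz Hi Hza Hside k Hk Hkz.
  pose proof (gap_outside ip iq k Hg Hk). pose proof (Hnz k Hk).
  destruct Hg as [Hip [Hiq _]].
  unfold outer in *. destruct Hi as [-> | ->].
  - pose proof (pt_neq_a ip Hip). lra.
  - pose proof (pt_neq_a iq Hiq). lra.
Qed.

Lemma shadow (z : R) : hull z -> z <> a -> f z <> a ->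
  exists i, (i < N)%nat /\
    (forall k, (k < N)%nat -> outer a (pt k) z -> outer a (pt k) (pt i)) /\
    (a < pt i <-> a < z) /\ outer a (f (pt i)) (f z).
Proof.
  intros Hz n1 n2.
  destruct (classic (exists i, (i < N)%nat /\ pt i = z)) as [[i [Hi <-]]|NP].
  { exists i. repeat split; auto. unfold outer; lra. }
  assert (Hnz : forall k, (k < N)%nat -> pt k <> z) by (intros k Hk E; apply NP; eauto).
  destruct (hull_gap z Hz Hnz) as [ip [iq [Hg [Hpz Hzq]]]].
  destruct (gap_affine ip iq Hg) as [c Hc].
  pose proof (Hc z ltac:(lra)) as Ez. pose proof (Hc (pt iq) ltac:(lra)) as Eq.
  pose proof (gap_end_dominates ip iq) as Hdom.
  pose proof Hg as [Hip [Hiq _]].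
  pose proof (pt_neq_a ip Hip). pose proof (pt_neq_a iq Hiq).
  destruct (classic (pt ip < a < pt iq)) as [[pa aq]|Hsame].
  - (* a lies in the gap: its ends are mapped across it, so f decreases there
       and z is shadowed by the end on its side *)
    pose proof (Hc a ltac:(lra)) as Ea.
    destruct (pt_step ip Hip) as [jp [Hjp [Ejp _]]].
    destruct (pt_step iq Hiq) as [jq [Hjq [Ejq _]]].
    destruct (cycle_side ip Hip) as [Hp _]. destruct (cycle_side iq Hiq) as [_ Hq].
    assert (fp : pt iq <= f (pt ip)).
    { rewrite <- Ejp in *. destruct (gap_outside ip iq jp Hg Hjp); lra. }
    assert (cneg : c < 0) by nra.
    destruct (Rlt_le_dec z a) as [za|az].
    + exists ip. split; [auto|split; [apply Hdom; auto; lra|split; [lra|]]].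
      unfold outer. right. split; nra.
    + exists iq. split; [auto|split; [apply Hdom; auto; lra|split; [lra|]]].
      unfold outer. left. split; nra.
  - (* the gap lies on one side of a: f z lies between the images of its ends,
       and the end whose image is beyond f z shadows z *)
    assert (Hside : forall i, i = ip \/ i = iq -> (a < pt i <-> a < z)).
    { intros i [-> | ->]; split; intros; destruct (Rlt_le_dec (pt ip) a); lra. }
    destruct (affine_between (f (pt ip)) c (pt ip) z (pt iq)) as [h|h]; try lra;
      destruct (Rlt_le_dec (f z) a);
      [exists ip | exists iq | exists iq | exists ip];
      (split; [auto|split; [apply Hdom; auto|split; [apply Hside; auto|unfold outer; lra]]]).
Qed.

Lemma outer_code_step (z : R) : hull z -> z <> a -> f z <> a ->
  outer_code z + rho - phi f a z <= outer_code (f z).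
Proof.
  intros Hz n1 n2.
  destruct (shadow z Hz n1 n2) as [i [Hi [Hdom [Hside Hout]]]].
  destruct (code_step i Hi) as [j [Hj [Ej Lj]]].
  pose proof (outer_code_le i z Hi Hdom).
  assert (L j <= outer_code (f z)) by (apply outer_code_ge; [exact Hj|rewrite Ej; exact Hout]).
  assert (phi f a (pt i) = phi f a z).
  { apply phi_same_side; auto. unfold outer in Hout. lra. }
  lra.
Qed.

Lemma phi_sum_lower_bound (y : R) (m : nat) : hull y -> least_period f y m -> (2 <= m)%nat ->
  INR m * rho <= phi_sum f a y m.
Proof.
  intros Hy Hl H2.
  assert (Inv : forall k, (k <= m)%nat ->
    outer_code y + INR k * rho - phi_sum f a y k <= outer_code (itr f k y)).
  { induction k as [|k IH]; intros Hk; [simpl; lra|].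
    cbn [phi_sum]. rewrite S_INR. change (itr f (S k) y) with (f (itr f k y)).
    pose proof (outer_code_step (itr f k y) (orbit_in_hull y k Hy)
      (orbit_avoids_fixed f a y m k Hfa Hl H2 ltac:(lia))
      (orbit_avoids_fixed f a y m (S k) Hfa Hl H2 Hk)).
    specialize (IH ltac:(lia)). lra. }
  pose proof (Inv m (le_n m)) as Hm. destruct Hl as [_ [Hym _]]. rewrite Hym in Hm. lra.
Qed.

Theorem over_rotation_number_ge (y : R) (m : nat) :
  hull y -> least_period f y m -> (2 <= m)%nat -> rho <= over_rotation_number f y m.
Proof.
  intros Hy Hl H2. unfold over_rotation_number.
  rewrite (sign_change_count_phi y m Hy Hl H2).
  pose proof (phi_sum_lower_bound y m Hy Hl H2) as Hbound.
  assert (Hm : 0 < INR m) by (apply lt_0_INR; lia).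
  apply (Rmult_le_reg_r (INR m)); auto.
  replace (2 * phi_sum f a y m / (2 * INR m) * INR m) with (phi_sum f a y m) by (field; lra).
  lra.
Qed.

End Cycle.

Theorem lemma3p3 (f : R -> R) (x0 a : R) (n r s : nat) :
  (1 < n)%nat -> Nat.gcd r s = 1%nat ->
  leftmost_cycle f x0 (n * s) ->
  orp f x0 (n * r) (n * s) ->
  P_linear f x0 (n * s) ->
  convergent f x0 (n * s) ->
  (* a is the fixed point of the P-linear map (in the hull of P) *)
  f a = a ->
  (exists i j : nat, (i < n * s)%nat /\ (j < n * s)%nat /\
     itr f i x0 <= a <= itr f j x0) ->
  code_nondecreasing f a (INR (n * r) / INR (n * s)) x0 (n * s) ->
  forall (y : R) (m : nat),
    (exists i j : nat, (i < n * s)%nat /\ (j < n * s)%nat /\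
       itr f i x0 <= y <= itr f j x0) ->
    least_period f y m -> (2 <= m)%nat ->
    ~ (over_rotation_number f y m < INR r / INR s).
Proof.
  intros Hn _ [Hper _] [_ [HN Hcount]] Hlin Hconv Hfa Ha Hcode y m Hy Hl Hm.
  assert (Hs : INR s <> 0) by (apply not_0_INR; intros ->; lia).
  assert (Hn0 : INR n <> 0) by (apply not_0_INR; lia).
  (* rho(P) = nr/ns: the code closes up around P *)
  assert (Hclosed : code f a (INR (n * r) / INR (n * s)) x0 (n * s) = 0).
  { pose proof (sign_change_count_phi f x0 a (n * s) HN Hper Hlin Hconv Hfa Ha x0 (n * s)
      (pt_in_hull f x0 (n * s) 0 ltac:(lia)) Hper HN) as E.
    rewrite Hcount, mult_INR in E. unfold code. rewrite !mult_INR in *. simpl INR in E.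
    field_simplify; [lra|auto]. }
  pose proof (over_rotation_number_ge f x0 a (n * s) HN Hper Hlin Hconv Hfa Ha _ Hcode Hclosed
    y m Hy Hl Hm) as Hge.
  replace (INR (n * r) / INR (n * s)) with (INR r / INR s) in Hge
    by (rewrite !mult_INR; field; auto).
  lra.
Qed.
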